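(* For all $0\leq i\leq k$, $$f_{k,i}(x)=(1+x)^{\binom{i}{2}}\prod_{\ell=i+1}^{k}\bigl((1+x)^{\ell}-1\bigr).$$
   Context: An inversion sequence of length $n$ is $e=e_1\ldots e_n$ with $0\le e_i<i$. $\mathrm{asc}(e_1\ldots e_i)=|\{\ell\in[i-1]:e_\ell<e_{\ell+1}\}|$. An ascent sequence is an inversion sequence with $e_{i+1}\le \mathrm{asc}(e_1\ldots e_i)+1$ for all $i$; it is primitive if $e_i\ne e_{i+1}$ for all $i$. Let $\mathcal{PA}$ be the set of primitive ascent sequences of all lengths $\geq1$. For primitive $e$, partition $e$ into maximal strictly decreasing consecutive blocks (runs); an entry is a tail if it is the last (smallest) entry of its run. Define $\mathrm{wt}(e)=\prod_{i=1}^{\mathrm{len}(e)}\mathrm{wt}(e_i)$ with $\mathrm{wt}(e_i)=1$ if $e_i$ is a tail and $\mathrm{wt}(e_i)=x$ otherwise. A sequence avoids $\underline{12}0$ if there are no indices $2\le i<j$ with $e_j<e_{i-1}<e_i$. Let $\mathcal{PA}_{k,i}(\underline{12}0)$ be the set of $\underline{12}0$-avoiding $e\in\mathcal{PA}$ with $\mathrm{asc}(e)=k$ and last entry equal to $i$, and $f_{k,i}(x)=\sum_{e\in\mathcal{PA}_{k,i}(\underline{12}0)}\mathrm{wt}(e)$. *)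

From mathcomp Require Import all_boot all_order all_algebra.
Set Implicit Arguments. Unset Strict Implicit. Unset Printing Implicit Defensive.
Import GRing.Theory.

(* Sequences e = e_1 ... e_n are represented as (seq nat), 0-indexed:
   e_{t+1} = nth 0 e t. *)

Fixpoint asc (s : seq nat) : nat :=
  match s with
  | x :: ((y :: _) as r) => (x < y) + asc r
  | _ => 0
  end.

Definition is_inversion (e : seq nat) : Prop :=
  forall t, t < size e -> nth 0 e t < t.+1.

Definition is_ascent (e : seq nat) : Prop :=
  is_inversion e /\
  forall t, 0 < t < size e -> nth 0 e t <= asc (take t e) + 1.

Definition is_primitive (e : seq nat) : Prop :=
  forall t, t.+1 < size e -> nth 0 e t != nth 0 e t.+1.

(* avoids 1_2_0 (underlined 12): no 2 <= i < j (1-indexed) with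
   e_j < e_{i-1} < e_i.  0-indexed: no 1 <= a < b < size e with
   e[b] < e[a-1] < e[a]. *)
Definition avoids_120 (e : seq nat) : Prop :=
  forall a b, 0 < a -> a < b -> b < size e ->
    ~ (nth 0 e b < nth 0 e a.-1 < nth 0 e a).

(* An entry is a tail iff it is the last entry of its maximal strictly
   decreasing run, i.e. it is the last entry of e or the next entry is not
   smaller. *)
Definition is_tail (e : seq nat) (t : nat) : bool :=
  (t.+1 >= size e) || (nth 0 e t <= nth 0 e t.+1).

Definition nontails (e : seq nat) : nat :=
  count (fun t => ~~ is_tail e t) (iota 0 (size e)).

Definition wt (e : seq nat) : {poly int} := 'X ^+ nontails e.

Definition in_PA120 (k i : nat) (e : seq nat) : Prop :=
  0 < size e /\ is_ascent e /\ is_primitive e /\ avoids_120 e /\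
  asc e = k /\ last 0 e = i.

From mathcomp Require Import all_boot all_order all_algebra zify ring.
Import GRing.Theory.

(* A primitive sequence with no ascent is strictly decreasing, so every e in
   PA_{k+1}(12_0) splits uniquely as P ++ r with r its last maximal decreasing
   run and P in PA_k(12_0). If P ends with a, the conditions on e become
   a < head r <= k + 1 (ascent sequence) and a <= last r (12_0-avoidance), and
   wt e = wt P * x^(|r| - 1). Decreasing runs ending in i with head at most K
   are counted by y^(K - i), where y = 1 + x, hence
     f_{k+1,i} = y^(k+1-i) * sum_(a <= i) f_{k,a} - f_{k,i},
   a recursion that the product formula satisfies because its partial sums
   over a < i telescope to y^C(i,2) * prod_(l = i..k) (y^l - 1). *)

Fixpoint des (s : seq nat) : nat :=
  match s with
  | x :: ((y :: _) as r) => (y < x) + des r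
  | _ => 0
  end.

Lemma asc_cons x s : asc (x :: s) = ((0 < size s) && (x < head 0 s)) + asc s.
Proof. by case: s. Qed.

Lemma des_cons x s : des (x :: s) = ((0 < size s) && (head 0 s < x)) + des s.
Proof. by case: s. Qed.

Lemma asc_cat P r : P != [::] -> r != [::] ->
  asc (P ++ r) = asc P + (last 0 P < head 0 r) + asc r.
Proof.
elim: P => [//|x [|y P] IH] _ r0; first by case: r r0 {IH}.
by rewrite cat_cons [LHS]asc_cons IH // [asc (x :: _)]asc_cons /= !addnA.
Qed.

Lemma des_cat P r : P != [::] -> r != [::] ->
  des (P ++ r) = des P + (head 0 r < last 0 P) + des r.
Proof.
elim: P => [//|x [|y P] IH] _ r0; first by case: r r0 {IH}.
by rewrite cat_cons [LHS]des_cons IH // [des (x :: _)]des_cons /= !addnA.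
Qed.

Lemma asc_catr P s : asc P <= asc (P ++ s).
Proof.
have [->|P0] := eqVneq P [::]; first by [].
have [->|s0] := eqVneq s [::]; first by rewrite cats0.
by rewrite asc_cat // -addnA leq_addr.
Qed.

Lemma asc_leq_size s : asc s <= (size s).-1.
Proof.
elim: s => [//|x s IH]; rewrite asc_cons.
case: s IH => [//|y s] /= IH.
by rewrite -[(size s).+1]add1n leq_add ?leq_b1.
Qed.

Lemma nontails_des e : nontails e = des e.
Proof.
elim: e => [//|x s IH].
rewrite des_cons -IH /nontails /= -[1]/(1 + 0) iotaDl count_map.
congr (_ + _); rewrite /is_tail /=.
by case: s {IH} => //= y s; rewrite ltnNge.
Qed.

Lemma primitive_sorted e : is_primitive e <-> sorted (fun x y => x != y) e.
Proof.
case: e => [|x s]; first by split=> // t.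
by split=> [H|/(pathP 0) H t ts]; [apply/(pathP 0) => t ts; exact: H | exact: H].
Qed.

Lemma asc_decr r : sorted gtn r -> asc r = 0.
Proof.
elim: r => [//|x r IH] Hr; rewrite asc_cons IH ?(path_sorted Hr) //.
by case: r Hr {IH} => //= y r /andP[/ltnW]; rewrite leqNgt => /negPf ->.
Qed.

Lemma des_decr r : sorted gtn r -> des r = (size r).-1.
Proof.
elim: r => [//|x r IH] Hr; rewrite des_cons IH ?(path_sorted Hr) //.
by case: r Hr {IH} => //= y r /andP[->].
Qed.

Lemma decr_of_asc0 r : sorted (fun x y => x != y) r -> asc r = 0 -> sorted gtn r.
Proof.
elim: r => [//|x [//|y r] IH] Hr; rewrite asc_cons /=.
move: Hr => /= /andP[xy Hr]; case: ltngtP xy => //= yx _ A.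
exact: IH.
Qed.

Lemma decr_nth r i j : sorted gtn r -> i < j < size r -> nth 0 r j < nth 0 r i.
Proof.
move=> Hr /andP[ij jr]; apply: (sorted_ltn_nth (rev_trans ltn_trans)) => //.
by rewrite inE (ltn_trans ij).
Qed.

Lemma nth_decr_le_head r j : sorted gtn r -> nth 0 r j <= head 0 r.
Proof.
move=> Hr; rewrite -nth0; case: j => [//|j].
have [jr|jr] := ltnP j.+1 (size r); first by rewrite ltnW // decr_nth.
by rewrite nth_default.
Qed.

Lemma last_decr_le_nth r j : sorted gtn r -> j < size r -> last 0 r <= nth 0 r j.
Proof.
move=> Hr jr; rewrite -nth_last.
case: (ltngtP j (size r).-1) => [lt|gt|-> //]; last lia.
by rewrite ltnW // decr_nth // lt; lia.
Qed.

Lemma last_lt_head_decr r : sorted gtn r -> 1 < size r -> last 0 r < head 0 r.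
Proof. by move=> Hr r_gt1; rewrite -nth_last -nth0 decr_nth // prednK ?leqnn //; lia. Qed.

Lemma last_run_decomp e : 0 < asc e -> exists P r,
  [/\ e = P ++ r, P != [::], r != [::], last 0 P < head 0 r & asc r = 0].
Proof.
elim: e => [//|x s IH]; rewrite asc_cons.
have [A0|Apos] := posnP (asc s).
  rewrite A0 addn0 lt0b => /andP[s0 xs].
  by exists [:: x], s; split=> //; case: s s0 {IH A0 xs}.
move=> _; have [P [r [-> P0 r0 Pr Ar]]] := IH Apos.
by exists (x :: P), r; split=> //=; case: P P0 Pr {IH}.
Qed.

Lemma last_run_unique P1 r1 P2 r2 : P1 ++ r1 = P2 ++ r2 ->
  sorted gtn r1 -> sorted gtn r2 -> r1 != [::] -> r2 != [::] ->
  last 0 P1 < head 0 r1 -> last 0 P2 < head 0 r2 -> P1 = P2 /\ r1 = r2.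
Proof.
wlog le12 : P1 r1 P2 r2 / size P1 <= size P2.
  move=> W; have [le|/ltnW le] := leqP (size P1) (size P2); first exact: W.
  move=> E d1 d2 n1 n2 a1 a2.
  by have [-> ->] := W P2 r2 P1 r1 le (esym E) d2 d1 n2 n1 a2 a1.
move=> E decr1 _ _ r20 _ P2r2.
rewrite leq_eqVlt in le12; case/orP: le12 => [/eqP eq12|lt12].
  by move/eqP: E; rewrite eqseq_cat // => /andP[/eqP -> /eqP ->].
exfalso; set m := drop (size P1) P2.
have m0 : m != [::] by rewrite -size_eq0 size_drop subn_eq0 -ltnNge.
have r1E : r1 = m ++ r2 by rewrite -(drop_size_cat r1 (erefl (size P1))) E drop_cat lt12.
have P2m : last 0 P2 = last 0 m.
  by rewrite -(cat_take_drop (size P1) P2) last_cat -/m; case: (m) m0.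
move: (asc_decr _ decr1); rewrite r1E asc_cat // -P2m P2r2; lia.
Qed.

Section CatRun.

Variables P r : seq nat.
Hypotheses (P0 : P != [::]) (r0 : r != [::]) (decr_r : sorted gtn r)
  (ascent_Pr : last 0 P < head 0 r).

Lemma asc_cat_run : asc (P ++ r) = (asc P).+1.
Proof. by rewrite asc_cat // ascent_Pr (asc_decr _ decr_r) addn0 addn1. Qed.

Lemma wt_cat_run : wt (P ++ r) = (wt P * 'X ^+ (size r).-1)%R.
Proof.
by rewrite /wt !nontails_des des_cat // (des_decr _ decr_r) ltnNge (ltnW ascent_Pr) addn0 exprD.
Qed.

Lemma last_cat_run : last 0 (P ++ r) = last 0 r.
Proof. by rewrite last_cat; case: r r0. Qed.

Lemma primitive_cat_run : is_primitive (P ++ r) <-> is_primitive P.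
Proof.
rewrite !primitive_sorted; split=> [/cat_sorted2[] //|].
case: P P0 ascent_Pr => [//|x P'] _; case: r r0 decr_r => [//|z r'] _ /= dr xz sP.
rewrite cat_path sP /= neq_ltn xz /=.
by apply: sub_path dr => u v /= vu; rewrite neq_ltn vu orbT.
Qed.

Lemma ascent_cat_run : is_ascent (P ++ r) <-> is_ascent P /\ head 0 r <= (asc P).+1.
Proof.
have P_gt0 : 0 < size P by rewrite lt0n size_eq0.
have r_gt0 : 0 < size r by rewrite lt0n size_eq0.
have asc_lt : asc P < size P by rewrite (leq_ltn_trans (asc_leq_size P)) ?ltn_predL.
rewrite /is_ascent /is_inversion size_cat; split.
  move=> [inv ascent]; split; first split.
  - by move=> t tP; have := inv t; rewrite nth_cat tP; apply; lia.
  - move=> t /andP[t0 tP]; have := ascent t; rewrite nth_cat take_cat tP t0.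
    by apply; lia.
  - have := ascent (size P); rewrite nth_cat take_size_cat // ltnn subnn nth0 addn1.
    by apply; lia.
move=> [[inv ascent] head_r].
have run_le t : size P <= t -> nth 0 (P ++ r) t <= (asc P).+1.
  by move=> Pt; rewrite nth_cat ltnNge Pt (leq_trans (nth_decr_le_head _ _ decr_r)).
split=> [t tPr|t /andP[t0 tPr]]; have [tP|Pt] := ltnP t (size P).
- by rewrite nth_cat tP inv.
- by rewrite ltnS (leq_trans (run_le t Pt)) // (leq_trans asc_lt Pt).
- by rewrite nth_cat take_cat tP ascent // t0.
- by rewrite take_cat ltnNge Pt /= addn1 (leq_trans (run_le t Pt)) // ltnS asc_catr.
Qed.

Lemma avoids_120_cat_run : avoids_120 (P ++ r) <-> avoids_120 P /\ last 0 P <= last 0 r.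
Proof.
set n := size P.
have n_gt0 : 0 < n by rewrite lt0n size_eq0.
have eP t : t < n -> nth 0 (P ++ r) t = nth 0 P t by rewrite nth_cat => ->.
have er t : n <= t -> nth 0 (P ++ r) t = nth 0 r (t - n) by rewrite nth_cat ltnNge => ->.
have lastP : nth 0 P n.-1 = last 0 P by rewrite nth_last.
rewrite /avoids_120 size_cat; split=> [av|[avP lePr] a b a0 ab b_lt /andP[ba aa]].
  split=> [a b a0 ab bn|].
    by have := av a b a0 ab; rewrite !eP; [apply; lia | lia..].
  have [r_le1|r_gt1] := leqP (size r) 1.
    have -> : last 0 r = head 0 r by rewrite -nth_last -nth0 (_ : (size r).-1 = 0) //; lia.
    exact: ltnW.
  rewrite leqNgt; apply/negP => rP.
  have := av n (n + (size r).-1) n_gt0.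
  rewrite (er n) // (eP n.-1) ?ltn_predL // er ?leq_addr // addKn subnn nth0.
  by rewrite nth_last lastP rP ascent_Pr; apply; lia.
have [bn|nb] := ltnP b n.
  by apply: (avP a b a0 ab bn); move: ba aa; rewrite !eP //; lia.
have le_b : last 0 P <= nth 0 (P ++ r) b.
  by rewrite er // (leq_trans lePr) // last_decr_le_nth //; lia.
have [an|na] := ltnP a n.
  have le_a1 : nth 0 P a.-1 <= last 0 P.
    move: aa; rewrite !eP //; last lia.
    have [->|a_lt] : a = n.-1 \/ a < n.-1 by lia.
      by rewrite lastP => /ltnW.
    move=> aa; rewrite leqNgt; apply/negP => h.
    by apply: (avP a n.-1 a0 a_lt); rewrite ?lastP ?h //; lia.
  by move: ba; rewrite (eP a.-1); lia.
have [a_le_n|n_lt_a] := leqP a n.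
  move: ba; have -> : a = n by lia.
  by rewrite (eP n.-1) ?ltn_predL // lastP; lia.
move: aa; rewrite !er; try lia.
have -> : a - n = (a.-1 - n).+1 by lia.
by rewrite ltnNge ltnW // decr_nth //; lia.
Qed.

Lemma in_PA120_cat_run k : in_PA120 k.+1 (last 0 r) (P ++ r) <->
  [/\ in_PA120 k (last 0 P) P, head 0 r <= k.+1 & last 0 P <= last 0 r].
Proof.
rewrite /in_PA120 ascent_cat_run primitive_cat_run avoids_120_cat_run.
have P_gt0 : 0 < size P by rewrite lt0n size_eq0.
rewrite asc_cat_run last_cat_run size_cat (ltn_addr _ P_gt0).
by split=> [[_ [[? ?] [? [[? ?] [[<-] _]]]]] | [[_ [? [? [? [<- _]]]]] ? ?]].
Qed.

End CatRun.

Fixpoint decr_runs (K : nat) : seq (seq nat) :=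
  if K is K'.+1 then decr_runs K' ++ [seq K :: s | s <- [::] :: decr_runs K']
  else [:: [:: 0]].

Lemma mem_decr_runs K r :
  (r \in decr_runs K) = [&& r != [::], sorted gtn r & head 0 r <= K].
Proof.
elim: K r => [|K IH] r.
  rewrite inE; case: r => [//|x [|y s]] /=; first by rewrite eqseq_cons andbT leqn0.
  by rewrite eqseq_cons /= andbF; case: x => [|x]; rewrite ?andbF.
rewrite /= mem_cat IH inE; apply/idP/idP.
  case/or3P => [/and3P[-> -> /leqW -> //]|/eqP -> /=|]; first exact: leqnn.
  case/mapP => s; rewrite IH => /and3P[s0 Hs sK] ->.
  by case: s s0 Hs sK => [//|y s] _ /= Hs yK; rewrite ltnS yK Hs ltnSn.
case: r => [//|x s] /= /andP[Hs]; rewrite leq_eqVlt ltnS => /orP[/eqP xK|->]; last by rewrite Hs.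
case: s Hs => [|y s] Hs; first by rewrite xK eqxx orbT.
apply/or3P/Or33/mapP; exists (y :: s); last by rewrite xK.
by move: Hs => /= /andP[yx Hs]; rewrite IH /= Hs -ltnS -xK yx.
Qed.

Lemma uniq_decr_runs K : uniq (decr_runs K).
Proof.
elim: K => [//|K IH] /=; rewrite cat_uniq IH /= map_inj_uniq ?andbT; last by move=> ? ? [].
apply/andP; split.
  rewrite negb_or mem_decr_runs /= ltnn /=.
  by apply/hasPn => _ /mapP[s _ ->]; rewrite mem_decr_runs /= ltnn !andbF.
by rewrite IH andbT; apply/mapP => -[s]; rewrite mem_decr_runs => /and3P[+ _ _] [s0]; rewrite -s0.
Qed.

Definition runs_after (a K : nat) : seq (seq nat) :=
  [seq r <- decr_runs K | (a < head 0 r) && (a <= last 0 r)].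

Lemma mem_runs_after a K r : (r \in runs_after a K) =
  [&& r != [::], sorted gtn r, head 0 r <= K, a < head 0 r & a <= last 0 r].
Proof. by rewrite mem_filter mem_decr_runs andbC -!andbA. Qed.

Fixpoint pa120 (k : nat) : seq (seq nat) :=
  if k is k'.+1 then [seq P ++ r | P <- pa120 k', r <- runs_after (last 0 P) k]
  else [:: [:: 0]].

Lemma in_PA120_0 e : in_PA120 0 (last 0 e) e <-> e = [:: 0].
Proof.
split=> [[e0 [[inv _] [prim [_ [asc0 _]]]]] | ->].
  case: e e0 inv prim asc0 => [//|x s] _ inv.
  have -> : x = 0 by have := inv 0 isT; rewrite ltnS leqn0 => /eqP.
  case: s {inv} => [//|[|y] s] prim; first by have := prim 0 isT.
  by rewrite asc_cons.
do !split.
- by case.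
- by move=> [|[|t]] /andP[].
- by case.
- by move=> [|a] [|[|b]].
Qed.

Lemma mem_pa120 k e : e \in pa120 k <-> in_PA120 k (last 0 e) e.
Proof.
elim: k e => [|k IH] e; first by rewrite in_PA120_0 inE; split=> /eqP.
split.
  case/allpairsPdep => P [r [/IH inP]]; rewrite mem_runs_after => /and5P[r0 dr hr Pr lePr] ->.
  have P0 : P != [::] by rewrite -size_eq0 -lt0n; case: inP.
  by rewrite last_cat_run //; apply/in_PA120_cat_run.
move=> inPr; have [_ [_ [prim [_ [asc_e _]]]]] := inPr.
have [P [r [eE P0 r0 Pr asc_r]]] := last_run_decomp e ltac:(by rewrite asc_e).
move: prim inPr; rewrite {}eE primitive_sorted => /cat_sorted2[_ /decr_of_asc0/(_ asc_r) dr].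
rewrite last_cat_run // => /in_PA120_cat_run-/(_ P0 r0 dr Pr)[inP hr lePr].
apply/allpairsPdep; exists P, r; split=> //; first exact/IH.
by rewrite mem_runs_after r0 dr hr Pr lePr.
Qed.

Lemma uniq_pa120 k : uniq (pa120 k).
Proof.
elim: k => [//|k IH] /=; apply: allpairs_uniq_dep => // [P _|].
  by rewrite filter_uniq // uniq_decr_runs.
move=> _ _ /allpairsPdep[P1 [r1 [_ R1 ->]]] /allpairsPdep[P2 [r2 [_ R2 ->]]] /= E.
move: R1 R2; rewrite !mem_runs_after => /and5P[r10 dr1 _ a1 _] /and5P[r20 dr2 _ a2 _].
by have [-> ->] := last_run_unique _ _ _ _ E dr1 dr2 r10 r20 a1 a2.
Qed.

Local Open Scope ring_scope.

Local Notation y := (1 + 'X : {poly int}).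

Lemma big_decr_runsS (R : nmodType) K (F : seq nat -> R) :
  \sum_(r <- decr_runs K.+1) F r =
  \sum_(r <- decr_runs K) F r + F [:: K.+1] + \sum_(r <- decr_runs K) F (K.+1 :: r).
Proof. by rewrite /= big_cat big_cons big_map; apply: addrA. Qed.

Lemma decr_runs_gf K i :
  \sum_(r <- decr_runs K | last 0 r == i) 'X ^+ (size r).-1 =
  if (i <= K)%N then y ^+ (K - i) else 0.
Proof.
elim: K => [|K IH]; first by rewrite big_mkcond big_seq1 leqn0 eq_sym; case: eqP.
rewrite big_mkcond big_decr_runsS -big_mkcond IH /= eq_sym.
have -> : \sum_(s <- decr_runs K)
      (if last 0 (K.+1 :: s) == i then 'X ^+ (size (K.+1 :: s)).-1 else 0) =
    'X * (if (i <= K)%N then y ^+ (K - i) else 0).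
  rewrite -IH mulr_sumr [RHS]big_mkcond big_seq [RHS]big_seq; apply: eq_bigr => s.
  rewrite mem_decr_runs => /and3P[s0 _ _] /=.
  by case: s s0 => [//|z s] _ /=; rewrite exprS.
case: (ltngtP i K.+1) => [iK|Ki|->].
- by rewrite ltnS in iK; rewrite iK subSn // exprS; ring.
- by rewrite leqNgt (ltnW Ki) mulr0 !addr0.
- by rewrite ltnn subnn mulr0 add0r addr0.
Qed.

Lemma decr_runs_gf_neq_seq1 K a i :
  \sum_(r <- decr_runs K | (r != [:: a]) && (last 0 r == i)) 'X ^+ (size r).-1 =
  (if (i <= K)%N then y ^+ (K - i) else 0) - ((a == i) && (a <= K)%N)%:R.
Proof.
rewrite -decr_runs_gf.
have [aK|Ka] := leqP a K; last first.
  rewrite andbF subr0 big_seq_cond [RHS]big_seq_cond; apply: eq_bigl => r.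
  case rD: (r \in decr_runs K) => //=.
  suff -> : r != [:: a] by [].
  by apply: contraTneq rD => ->; rewrite mem_decr_runs /= leqNgt Ka.
have aD : [:: a] \in decr_runs K by rewrite mem_decr_runs /= aK.
rewrite [in RHS](big_rem _ aD) rem_filter ?uniq_decr_runs // big_filter_cond /= andbT.
by case: eqP; rewrite ?expr0 addrC addrK // subr0 addr0.
Qed.

Lemma runs_after_gf a K i :
  \sum_(r <- runs_after a K | last 0 r == i) 'X ^+ (size r).-1 =
  if (a <= i <= K)%N then y ^+ (K - i) - (a == i)%:R else 0.
Proof.
rewrite big_filter_cond.
have [ai|ia] := leqP a i; last first.
  by rewrite big_pred0 // => r; case: eqP => [->|]; rewrite ?andbF // (leqNgt a i) ia andbF.
rewrite big_seq_cond (eq_bigl (fun r => (r \in decr_runs K) && ((r != [:: a]) && (last 0 r == i)))).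
  rewrite -big_seq_cond decr_runs_gf_neq_seq1 /=.
  case: leqP => iK; first by rewrite (leq_trans ai iK) andbT.
  by case: eqP => [ai_eq|]; rewrite ?ai_eq ?(leqNgt i K) ?iK subr0.
move=> r; case rD: (r \in decr_runs K) => //=.
case: (last 0 r =P i) => [lr|]; rewrite ?andbF // !andbT -lr in ai *; rewrite ai andbT.
move: rD; rewrite mem_decr_runs => /and3P[r0 dr _].
case: r r0 dr ai {lr} => [//|x [|z s]] _ dr ai.
  by rewrite ltn_neqAle ai andbT eqseq_cons /= andbT eq_sym.
by rewrite eqseq_cons andbF (leq_ltn_trans ai) // last_lt_head_decr.
Qed.

Lemma sum_by_key (R : pzSemiRingType) (T : Type) (s : seq T) (key : T -> nat)
    (f : T -> R) (c : nat -> R) n :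
  (forall a, (n <= a)%N -> c a = 0) ->
  \sum_(x <- s) f x * c (key x) = \sum_(0 <= a < n) (\sum_(x <- s | key x == a) f x) * c a.
Proof.
move=> c0; under [RHS]eq_bigr do rewrite big_mkcond mulr_suml.
rewrite exchange_big /=; apply: eq_bigr => x _.
have [kn|nk] := ltnP (key x) n; last first.
  rewrite c0 // mulr0 big1_seq // => a; rewrite mem_index_iota => /andP[_ an].
  by case: eqP => [ka|]; [lia | rewrite mul0r].
rewrite (bigD1_seq (key x)) ?mem_index_iota ?iota_uniq //= eqxx big1 ?addr0 // => a.
by rewrite eq_sym => /negPf ->; rewrite mul0r.
Qed.

Definition pa120_gf k i : {poly int} := \sum_(e <- pa120 k | last 0 e == i) wt e.

Lemma pa120_gf_step k i : pa120_gf k.+1 i = \sum_(P <- pa120 k)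
  wt P * (if (last 0 P <= i <= k.+1)%N then y ^+ (k.+1 - i) - (last 0 P == i)%:R else 0).
Proof.
rewrite /pa120_gf big_mkcond big_allpairs_dep; apply: eq_big_seq => P /mem_pa120 [P_gt0 _].
rewrite -runs_after_gf mulr_sumr [RHS]big_mkcond big_seq [RHS]big_seq; apply: eq_bigr => r.
rewrite mem_runs_after => /and5P[r0 dr _ Pr _].
have P0 : P != [::] by rewrite -size_eq0 -lt0n.
by rewrite last_cat_run // wt_cat_run //; case: eqP; rewrite ?mulr0.
Qed.

Definition pa120_formula k i : {poly int} :=
  y ^+ 'C(i, 2) * \prod_(i.+1 <= l < k.+1) (y ^+ l - 1).

Lemma sum_pa120_formula k i : (i <= k.+1)%N ->
  \sum_(0 <= a < i) pa120_formula k a = y ^+ 'C(i, 2) * \prod_(i <= l < k.+1) (y ^+ l - 1).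
Proof.
elim: i => [|i IH] ik; first by rewrite big_ltn // expr0 subrr mul0r mulr0 big_geq.
rewrite big_nat_recr //= IH ?(ltnW ik) // /pa120_formula (big_ltn ik) binS bin1 exprD; ring.
Qed.

Lemma pa120_formula_rec k i : (i <= k.+1)%N ->
  \sum_(0 <= a < i) pa120_formula k a * y ^+ (k.+1 - i) +
    (if (i <= k)%N then pa120_formula k i else 0) * (y ^+ (k.+1 - i) - 1) = pa120_formula k.+1 i.
Proof.
move=> ik; rewrite -mulr_suml sum_pa120_formula // /pa120_formula.
case: leqP => [ik'|ki]; last first.
  have -> : i = k.+1 by lia.
  by rewrite subnn !big_geq // expr0 mulr1 mul0r addr0.
rewrite big_ltn ?ltnS // [in RHS]big_nat_recr ?ltnS //=.
have -> : y ^+ k.+1 = y ^+ (k.+1 - i) * y ^+ i by rewrite -exprD subnK ?leqW.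
ring.
Qed.

Lemma pa120_gf_formula k i : pa120_gf k i = if (i <= k)%N then pa120_formula k i else 0.
Proof.
elim: k i => [|k IH] i.
  rewrite /pa120_gf big_mkcond big_seq1 /= leqn0 eq_sym /pa120_formula big_geq //.
  by case: eqP => // ->; rewrite /wt expr0 mulr1.
pose c a := if (a <= i <= k.+1)%N then y ^+ (k.+1 - i) - (a == i)%:R else 0.
rewrite pa120_gf_step (@sum_by_key _ _ _ (last 0) _ c i.+1) /c; last first.
  by move=> a; rewrite /c; case: leqP.
have [ik|ki] := leqP i k.+1; last first.
  by rewrite big1 // => a _; rewrite andbF mulr0.
rewrite big_nat_recr //= leqnn eqxx -/(pa120_gf k i) IH -(pa120_formula_rec _ _ ik).
congr (_ + _); apply: eq_big_nat => a /andP[_ ai].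
have ak : (a <= k)%N by rewrite -ltnS (leq_trans ai ik).
by rewrite -/(pa120_gf k a) IH ak (ltnW ai) (ltn_eqF ai) subr0.
Qed.

Theorem theorem2p3 (k i : nat) : (i <= k)%N ->
  exists L : seq (seq nat),
    uniq L /\ (forall e, e \in L <-> in_PA120 k i e) /\
    \sum_(e <- L) wt e =
      (1 + 'X) ^+ 'C(i, 2) * \prod_(i.+1 <= l < k.+1) ((1 + 'X) ^+ l - 1).
Proof.
move=> ik; exists [seq e <- pa120 k | last 0 e == i].
split; first by rewrite filter_uniq // uniq_pa120.
split=> [e|]; last by rewrite big_filter -/(pa120_gf k i) pa120_gf_formula ik.
rewrite mem_filter; split=> [/andP[/eqP <- /mem_pa120] //|inPA].
have [_ [_ [_ [_ [_ last_e]]]]] := inPA.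
by rewrite last_e eqxx; apply/mem_pa120; rewrite last_e.
Qed.
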